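(* Let $L$ be a lattice and $\mathbf x,\mathbf y\in L^n$. If $\mathbf x$ and $\mathbf y$ are comonotone, or if they are comparable (i.e. $\mathbf x\le\mathbf y$ or $\mathbf y\le\mathbf x$ componentwise), then $\mathbf x$ and $\mathbf y$ are both g-comonotone and dually g-comonotone.
   Context: $\mathbf x,\mathbf y\in L^n$ are comonotone if for all $i,j\in\{1,\dots,n\}$: ($x_i\le x_j$ and $y_i\le y_j$) or ($x_i\ge x_j$ and $y_i\ge y_j$). They are g-comonotone if for every pair $i,j$: $(x_i\vee y_i)\wedge(x_j\vee y_j)=(x_i\wedge x_j)\vee(y_i\wedge y_j)$; dually g-comonotone if for every pair $i,j$: $(x_i\wedge y_i)\vee(x_j\wedge y_j)=(x_i\vee x_j)\wedge(y_i\vee y_j)$. *)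

From mathcomp Require Import all_boot all_order.
Set Implicit Arguments. Unset Strict Implicit. Unset Printing Implicit Defensive.
Import Order.Theory.
Local Open Scope order_scope.

Definition comonotone d (L : latticeType d) n (x y : 'I_n -> L) : Prop :=
  forall i j : 'I_n,
    (x i <= x j /\ y i <= y j) \/ (x j <= x i /\ y j <= y i).

Definition g_comonotone d (L : latticeType d) n (x y : 'I_n -> L) : Prop :=
  forall i j : 'I_n,
    (x i `|` y i) `&` (x j `|` y j) = (x i `&` x j) `|` (y i `&` y j).

Definition dually_g_comonotone d (L : latticeType d) n (x y : 'I_n -> L) : Prop :=
  forall i j : 'I_n,
    (x i `&` y i) `|` (x j `&` y j) = (x i `|` x j) `&` (y i `|` y j).

Definition vle d (L : latticeType d) n (x y : 'I_n -> L) : Prop :=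
  forall i : 'I_n, x i <= y i.

From mathcomp Require Import all_boot all_order.
Import Order.Theory.
Local Open Scope order_scope.

(* In both cases each of the two identities reduces, for a fixed pair (i, j),
   to an absorption: for comonotone vectors both sides equal the join (meet)
   of the componentwise smaller (larger) coordinates, and for comparable
   vectors both sides equal the meet of the larger (join of the smaller)
   vector's coordinates.  The case y <= x follows since both notions are
   symmetric in x and y. *)

Section LatticeIdentities.
Context {d : Order.disp_t} {L : latticeType d}.

Lemma meet_joins_homo (a1 a2 b1 b2 : L) : a1 <= a2 -> b1 <= b2 ->
  (a1 `|` b1) `&` (a2 `|` b2) = (a1 `&` a2) `|` (b1 `&` b2).
Proof. by move=> le_a le_b; rewrite (meet_l (leU2 le_a le_b)) (meet_l le_a) (meet_l le_b). Qed.

Lemma join_meets_homo (a1 a2 b1 b2 : L) : a1 <= a2 -> b1 <= b2 ->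
  (a1 `&` b1) `|` (a2 `&` b2) = (a1 `|` a2) `&` (b1 `|` b2).
Proof. by move=> le_a le_b; rewrite (join_r (leI2 le_a le_b)) (join_r le_a) (join_r le_b). Qed.

Lemma meet_joins_le (a1 a2 b1 b2 : L) : a1 <= b1 -> a2 <= b2 ->
  (a1 `|` b1) `&` (a2 `|` b2) = (a1 `&` a2) `|` (b1 `&` b2).
Proof. by move=> le1 le2; rewrite (join_r le1) (join_r le2) (join_r (leI2 le1 le2)). Qed.

Lemma join_meets_le (a1 a2 b1 b2 : L) : a1 <= b1 -> a2 <= b2 ->
  (a1 `&` b1) `|` (a2 `&` b2) = (a1 `|` a2) `&` (b1 `|` b2).
Proof. by move=> le1 le2; rewrite (meet_l le1) (meet_l le2) (meet_l (leU2 le1 le2)). Qed.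

End LatticeIdentities.

Section GComonotone.
Variables (d : Order.disp_t) (L : latticeType d) (n : nat).
Implicit Types x y : 'I_n -> L.

Lemma g_comonotoneC x y : g_comonotone x y -> g_comonotone y x.
Proof. by move=> gxy i j; rewrite ![y _ `|` x _]joinC gxy joinC. Qed.

Lemma dually_g_comonotoneC x y : dually_g_comonotone x y -> dually_g_comonotone y x.
Proof. by move=> gxy i j; rewrite ![y _ `&` x _]meetC gxy meetC. Qed.

Lemma comonotone_g_comonotone x y : comonotone x y -> g_comonotone x y.
Proof.
move=> cxy i j; case: (cxy i j) => [[le_x le_y]|[le_x le_y]].
  exact: meet_joins_homo.
by rewrite meetC [x i `&` _]meetC [y i `&` _]meetC; apply: meet_joins_homo.
Qed.

Lemma comonotone_dually_g_comonotone x y :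
  comonotone x y -> dually_g_comonotone x y.
Proof.
move=> cxy i j; case: (cxy i j) => [[le_x le_y]|[le_x le_y]].
  exact: join_meets_homo.
by rewrite joinC [x i `|` _]joinC [y i `|` _]joinC; apply: join_meets_homo.
Qed.

Lemma vle_g_comonotone x y : vle x y -> g_comonotone x y.
Proof. by move=> lexy i j; apply: meet_joins_le; apply: lexy. Qed.

Lemma vle_dually_g_comonotone x y : vle x y -> dually_g_comonotone x y.
Proof. by move=> lexy i j; apply: join_meets_le; apply: lexy. Qed.

End GComonotone.

Theorem lemma1 (d : Order.disp_t) (L : latticeType d) (n : nat) (x y : 'I_n -> L) :
  (comonotone x y \/ vle x y \/ vle y x) ->
  g_comonotone x y /\ dually_g_comonotone x y.
Proof.
case=> [cxy|[lexy|leyx]]; split.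
- exact: comonotone_g_comonotone.
- exact: comonotone_dually_g_comonotone.
- exact: vle_g_comonotone.
- exact: vle_dually_g_comonotone.
- exact/g_comonotoneC/vle_g_comonotone.
- exact/dually_g_comonotoneC/vle_dually_g_comonotone.
Qed.
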